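(* There are no proper triharmonic curves with constant curvature immersed in the product space $\mathbb{H}^2(4a)\times\mathbb{R}$ ($a<0$).
   Context: $\mathbb{H}^2(4a)\times\mathbb{R}$ is the Riemannian product of the hyperbolic plane of constant curvature $4a<0$ with the real line; equivalently the BCV space $M(a,0)$, i.e. $\{(x,y,z):1+a(x^2+y^2)>0\}$ with metric $\frac{dx^2+dy^2}{[1+a(x^2+y^2)]^2}+dz^2$. An arc-length parametrized curve $\gamma$ with $T=\gamma'$ is triharmonic if $\nabla_T^5T+R(\nabla_T^3T,T)T-R(\nabla_T^2T,\nabla_TT)T=0$, where $\nabla$ is the Levi-Civita connection and $R(X,Y)=\nabla_X\nabla_Y-\nabla_Y\nabla_X-\nabla_{[X,Y]}$; it is proper if it is not a geodesic. The curvature is $\kappa=\lVert\nabla_TT\rVert$. *)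

(* The BCV space M(a,0) = H^2(4a) x R is modelled in its global coordinate
   chart {(x,y,z) : 1 + a(x^2+y^2) > 0} of R^3, with the metric
   (dx^2+dy^2)/[1+a(x^2+y^2)]^2 + dz^2.  Points and tangent vectors are
   functions nat -> R, with components 0,1,2 = x,y,z (other components are
   irrelevant). *)
From Stdlib Require Import Reals.
From Coquelicot Require Import Coquelicot.
Open Scope R_scope.

Definition vec := nat -> R.

Definition sum3 (f : nat -> R) : R := f 0%nat + f 1%nat + f 2%nat.

Definition in_M (a : R) (p : vec) : Prop := 1 + a * (p 0%nat ^ 2 + p 1%nat ^ 2) > 0.

Definition gmet (a : R) (i j : nat) (p : vec) : R :=
  if Nat.eqb i j then
    (if Nat.ltb i 2 then 1 / (1 + a * (p 0%nat ^ 2 + p 1%nat ^ 2)) ^ 2 else 1)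
  else 0.

Definition ginv (a : R) (i j : nat) (p : vec) : R :=
  if Nat.eqb i j then / gmet a i i p else 0.

Definition upd (p : vec) (i : nat) (s : R) : vec :=
  fun j => if Nat.eqb j i then s else p j.

Definition partial (i : nat) (f : vec -> R) (p : vec) : R :=
  Derive (fun s => f (upd p i s)) (p i).

Definition Gamma (a : R) (k i j : nat) (p : vec) : R :=
  / 2 * sum3 (fun l => ginv a k l p *
     (partial i (gmet a j l) p + partial j (gmet a i l) p - partial l (gmet a i j) p)).

(* components R^l_{ijk} with R(d_i,d_j)d_k = R^l_{ijk} d_l, for the convention
   R(X,Y) = nabla_X nabla_Y - nabla_Y nabla_X - nabla_[X,Y] *)
Definition Riem_comp (a : R) (l i j k : nat) (p : vec) : R :=
  partial i (Gamma a l j k) p - partial j (Gamma a l i k) p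
  + sum3 (fun m => Gamma a l i m p * Gamma a m j k p - Gamma a l j m p * Gamma a m i k p).

Definition Riem (a : R) (p : vec) (X Y Z : vec) : vec :=
  fun l => sum3 (fun i => sum3 (fun j => sum3 (fun k =>
     Riem_comp a l i j k p * X i * Y j * Z k))).

Definition gdot (a : R) (p : vec) (X Y : vec) : R :=
  sum3 (fun i => sum3 (fun j => gmet a i j p * X i * Y j)).

Definition vel (gamma : R -> vec) : R -> vec :=
  fun t k => Derive (fun s => gamma s k) t.

Definition covD (a : R) (gamma : R -> vec) (V : R -> vec) : R -> vec :=
  fun t k => Derive (fun s => V s k) t
    + sum3 (fun i => sum3 (fun j => Gamma a k i j (gamma t) * vel gamma t i * V t j)).

Fixpoint covDn (a : R) (gamma : R -> vec) (n : nat) (V : R -> vec) : R -> vec :=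
  match n with
  | O => V
  | S m => covD a gamma (covDn a gamma m V)
  end.

Definition nablaT (a : R) (gamma : R -> vec) (n : nat) : R -> vec :=
  covDn a gamma n (vel gamma).

Definition curvature (a : R) (gamma : R -> vec) (t : R) : R :=
  sqrt (gdot a (gamma t) (nablaT a gamma 1 t) (nablaT a gamma 1 t)).

Definition smooth_curve_in_M (a alpha beta : R) (gamma : R -> vec) : Prop :=
  (forall t, alpha < t < beta -> in_M a (gamma t)) /\
  (forall k n t, (k < 3)%nat -> alpha < t < beta ->
     ex_derive_n (fun s => gamma s k) n t).

Definition arc_length (a alpha beta : R) (gamma : R -> vec) : Prop :=
  forall t, alpha < t < beta -> gdot a (gamma t) (vel gamma t) (vel gamma t) = 1.

Definition triharmonic (a alpha beta : R) (gamma : R -> vec) : Prop :=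
  forall t, alpha < t < beta -> forall l, (l < 3)%nat ->
    nablaT a gamma 5 t l
    + Riem a (gamma t) (nablaT a gamma 3 t) (vel gamma t) (vel gamma t) l
    - Riem a (gamma t) (nablaT a gamma 2 t) (nablaT a gamma 1 t) (vel gamma t) l = 0.

Definition geodesic (a alpha beta : R) (gamma : R -> vec) : Prop :=
  forall t, alpha < t < beta -> forall k, (k < 3)%nat -> nablaT a gamma 1 t k = 0.

Definition constant_curvature (a alpha beta : R) (gamma : R -> vec) : Prop :=
  exists c, forall t, alpha < t < beta -> curvature a gamma t = c.

(* The derivatives T_i = nabla_T^i T of a unit-speed curve have inner products
   G_ij = <T_i, T_j> with G_ij' = G_(i+1)j + G_i(j+1), since nabla is metric.  Unit speed and
   constant curvature kappa fix the low-order G_ij, and pairing the triharmonic equation with T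
   (where both curvature terms drop out) gives <T_2, T_3> = 0, so |T_2|^2 is constant.
   The factor R is flat and parallel, so the vertical components f_i of T_i satisfy
   f_i' = f_(i+1), while the curvature tensor has no vertical component: f_5 = 0.
   Equality, or (through a Gram determinant in dimension 3) strict inequality, in the
   Cauchy-Schwarz inequality kappa^4 <= |T_2|^2 yields f_3 = -A f_1 with A > 0; hence
   f_5 = A^2 f_1 and f_1 = f_2 = f_3 = 0.  Pairing the triharmonic equation with T_1 then reads
   |T_3|^2 - 4a |T^h|^2 |T_2|^2 - 4a kappa^4 = 0, impossible when a < 0 and kappa > 0. *)

From Stdlib Require Import Reals Lra Lia.
From Coquelicot Require Import Coquelicot.
Open Scope R_scope.

(** * Connection and curvature of M(a,0) in coordinates *)

Definition conf (a x y : R) : R := 1 + a * (x ^ 2 + y ^ 2).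

Lemma Derive_inv_conf_sq_x (a x y : R) : conf a x y <> 0 ->
  Derive (fun s => 1 / conf a s y ^ 2) x = -4 * a * x / conf a x y ^ 3.
Proof.
  unfold conf; intros H; apply is_derive_unique; auto_derive.
  - simpl; rewrite Rmult_1_r; intros E; apply H; nra.
  - field; exact H.
Qed.

Lemma Derive_inv_conf_sq_y (a x y : R) : conf a x y <> 0 ->
  Derive (fun s => 1 / conf a x s ^ 2) y = -4 * a * y / conf a x y ^ 3.
Proof.
  unfold conf; intros H; apply is_derive_unique; auto_derive.
  - simpl; rewrite Rmult_1_r; intros E; apply H; nra.
  - field; exact H.
Qed.

Definition dgmet (a : R) (i j l : nat) (p : vec) : R :=
  if andb (Nat.eqb j l) (Nat.ltb j 2) then
    match i with
    | 0%nat => -4 * a * p 0%nat / conf a (p 0%nat) (p 1%nat) ^ 3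
    | 1%nat => -4 * a * p 1%nat / conf a (p 0%nat) (p 1%nat) ^ 3
    | _ => 0
    end
  else 0.

Lemma partial_gmet (a : R) (p : vec) (i j l : nat) :
  conf a (p 0%nat) (p 1%nat) <> 0 -> (i < 3)%nat -> (j < 3)%nat -> (l < 3)%nat ->
  partial i (gmet a j l) p = dgmet a i j l p.
Proof.
  intros H Hi Hj Hl; unfold partial, gmet, dgmet, upd.
  destruct i as [|[|[|i]]]; try lia; destruct j as [|[|[|j]]]; try lia;
    destruct l as [|[|[|l]]]; try lia; simpl; try apply Derive_const.
  all: first [apply Derive_inv_conf_sq_x | apply Derive_inv_conf_sq_y]; exact H.
Qed.

Definition chr_cx (k i j : nat) : R :=
  match k, i, j with
  | O, O, O => 1 | O, S O, S O => -1 | S O, O, S O => 1 | S O, S O, O => 1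
  | _, _, _ => 0
  end.

Definition chr_cy (k i j : nat) : R :=
  match k, i, j with
  | O, O, S O => 1 | O, S O, O => 1 | S O, O, O => -1 | S O, S O, S O => 1
  | _, _, _ => 0
  end.

Definition christoffel (a : R) (k i j : nat) (x y : R) : R :=
  -2 * a * (chr_cx k i j * x + chr_cy k i j * y) / conf a x y.

Lemma Gamma_christoffel (a : R) (p : vec) (k i j : nat) :
  conf a (p 0%nat) (p 1%nat) <> 0 -> (k < 3)%nat -> (i < 3)%nat -> (j < 3)%nat ->
  Gamma a k i j p = christoffel a k i j (p 0%nat) (p 1%nat).
Proof.
  intros H Hk Hi Hj; unfold Gamma, sum3.
  rewrite !partial_gmet by (auto; lia).
  unfold christoffel, ginv, gmet, dgmet.
  destruct k as [|[|[|k]]]; try lia; destruct i as [|[|[|i]]]; try lia;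
    destruct j as [|[|[|j]]]; try lia; simpl; unfold conf in *; field; exact H.
Qed.

Definition dchristoffel (a : R) (m k i j : nat) (x y : R) : R :=
  let c := chr_cx k i j * x + chr_cy k i j * y in
  match m with
  | O => -2 * a * (chr_cx k i j * conf a x y - c * (2 * a * x)) / conf a x y ^ 2
  | S O => -2 * a * (chr_cy k i j * conf a x y - c * (2 * a * y)) / conf a x y ^ 2
  | _ => 0
  end.

Lemma conf_upd_pos_locally (a : R) (p : vec) (i : nat) : 0 < conf a (p 0%nat) (p 1%nat) ->
  locally (p i) (fun s => 0 < conf a (upd p i s 0%nat) (upd p i s 1%nat)).
Proof.
  intros H.
  assert (Hc : continuous (fun s => conf a (upd p i s 0%nat) (upd p i s 1%nat)) (p i)).
  { apply (ex_derive_continuous (K := R_AbsRing) (V := R_NormedModule)).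
    unfold conf, upd; destruct i as [|[|i]]; simpl; auto_derive; auto. }
  apply Hc, (open_gt 0).
  unfold upd; destruct i as [|[|i]]; exact H.
Qed.

Lemma partial_Gamma (a : R) (p : vec) (m k i j : nat) : 0 < conf a (p 0%nat) (p 1%nat) ->
  (m < 3)%nat -> (k < 3)%nat -> (i < 3)%nat -> (j < 3)%nat ->
  partial m (Gamma a k i j) p = dchristoffel a m k i j (p 0%nat) (p 1%nat).
Proof.
  intros H Hm Hk Hi Hj; unfold partial.
  rewrite (Derive_ext_loc _
    (fun s => christoffel a k i j (upd p m s 0%nat) (upd p m s 1%nat))).
  - apply is_derive_unique; unfold christoffel, dchristoffel, conf, upd in *.
    destruct m as [|[|[|m]]]; try lia; simpl; auto_derive; try lra; field; lra.
  - generalize (conf_upd_pos_locally a p m H); apply filter_imp; intros s Hs.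
    apply Gamma_christoffel; auto; lra.
Qed.

Definition kron (m n : nat) : R := if Nat.eqb m n then 1 else 0.

Definition riem_coef (a : R) (l i j k : nat) (x y : R) : R :=
  if (Nat.ltb l 2 && Nat.ltb i 2 && Nat.ltb j 2 && Nat.ltb k 2)%bool then
    4 * a / conf a x y ^ 2 * (kron j k * kron i l - kron i k * kron j l)
  else 0.

Lemma Riem_comp_coef (a : R) (p : vec) (l i j k : nat) : 0 < conf a (p 0%nat) (p 1%nat) ->
  (l < 3)%nat -> (i < 3)%nat -> (j < 3)%nat -> (k < 3)%nat ->
  Riem_comp a l i j k p = riem_coef a l i j k (p 0%nat) (p 1%nat).
Proof.
  intros H Hl Hi Hj Hk; unfold Riem_comp, sum3.
  rewrite !partial_Gamma by (auto; lia).
  rewrite !Gamma_christoffel by (auto; try lra; lia).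
  unfold riem_coef, dchristoffel, christoffel, kron.
  destruct l as [|[|[|l]]]; try lia; destruct i as [|[|[|i]]]; try lia;
    destruct j as [|[|[|j]]]; try lia; destruct k as [|[|[|k]]]; try lia;
    simpl; unfold conf in *; field; lra.
Qed.

Definition hdot (a : R) (p X Y : vec) : R :=
  (X 0%nat * Y 0%nat + X 1%nat * Y 1%nat) / conf a (p 0%nat) (p 1%nat) ^ 2.

Lemma gdot_hdot (a : R) (p X Y : vec) : gdot a p X Y = hdot a p X Y + X 2%nat * Y 2%nat.
Proof. unfold gdot, sum3, gmet, hdot, conf; simpl; unfold Rdiv; ring. Qed.

Lemma Riem_hdot (a : R) (p X Y Z : vec) (l : nat) : 0 < conf a (p 0%nat) (p 1%nat) ->
  (l < 3)%nat ->
  Riem a p X Y Z l =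
  if Nat.ltb l 2 then 4 * a * (hdot a p Y Z * X l - hdot a p X Z * Y l) else 0.
Proof.
  intros H Hl; unfold Riem, sum3.
  rewrite !Riem_comp_coef by (auto; lia).
  unfold riem_coef, kron, hdot.
  destruct l as [|[|[|l]]]; try lia; simpl; unfold Rdiv; ring.
Qed.

Lemma gdot_Riem (a : R) (p X Y Z W : vec) : 0 < conf a (p 0%nat) (p 1%nat) ->
  gdot a p (Riem a p X Y Z) W =
  4 * a * (hdot a p Y Z * hdot a p X W - hdot a p X Z * hdot a p Y W).
Proof.
  intros H; rewrite gdot_hdot; unfold hdot at 1.
  rewrite !Riem_hdot by (auto; lia); simpl.
  unfold hdot; field; lra.
Qed.

Section InnerProduct.
Variables (a : R) (p : vec).

Lemma gdot_sym (X Y : vec) : gdot a p X Y = gdot a p Y X.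
Proof. rewrite !gdot_hdot; unfold hdot, Rdiv; ring. Qed.

Lemma gdot_add_sub_l (X Y Z W : vec) :
  gdot a p (fun l => X l + Y l - Z l) W = gdot a p X W + gdot a p Y W - gdot a p Z W.
Proof. rewrite !gdot_hdot; unfold hdot, Rdiv; ring. Qed.

Lemma gdot_comb_self (X Y : vec) (c : R) :
  gdot a p (fun l => X l + c * Y l) (fun l => X l + c * Y l) =
  gdot a p X X + 2 * c * gdot a p X Y + c * c * gdot a p Y Y.
Proof. rewrite !gdot_hdot; unfold hdot, Rdiv; ring. Qed.

Lemma gdot_0_l (X W : vec) : (forall l, (l < 3)%nat -> X l = 0) -> gdot a p X W = 0.
Proof.
  intros H; rewrite gdot_hdot; unfold hdot.
  rewrite (H 0%nat), (H 1%nat), (H 2%nat) by lia; unfold Rdiv; ring.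
Qed.

Hypothesis Hp : 0 < conf a (p 0%nat) (p 1%nat).

Lemma hdot_self_nonneg (X : vec) : 0 <= hdot a p X X.
Proof. unfold hdot; apply Rdiv_le_0_compat; [nra | apply pow_lt, Hp]. Qed.

Lemma gdot_self_nonneg (X : vec) : 0 <= gdot a p X X.
Proof. rewrite gdot_hdot; pose proof (hdot_self_nonneg X); nra. Qed.

Lemma gdot_self_0_vertical (X : vec) : gdot a p X X = 0 -> X 2%nat = 0.
Proof. rewrite gdot_hdot; pose proof (hdot_self_nonneg X); nra. Qed.

Lemma gdot_self_pos (X : vec) (k : nat) : (k < 3)%nat -> X k <> 0 -> 0 < gdot a p X X.
Proof.
  intros Hk Hx; rewrite gdot_hdot; unfold hdot.
  assert (0 < conf a (p 0%nat) (p 1%nat) ^ 2) by (apply pow_lt, Hp).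
  assert (0 <= (X 0%nat * X 0%nat + X 1%nat * X 1%nat) / conf a (p 0%nat) (p 1%nat) ^ 2)
    by (apply Rdiv_le_0_compat; nra).
  destruct k as [|[|[|k]]]; try lia; try nra.
  all: enough (0 < (X 0%nat * X 0%nat + X 1%nat * X 1%nat) / conf a (p 0%nat) (p 1%nat) ^ 2)
         by nra.
  all: apply Rdiv_lt_0_compat; nra.
Qed.

Lemma gdot_comb_self_residual (X Y : vec) : 0 < gdot a p Y Y ->
  gdot a p (fun l => X l + - (gdot a p X Y / gdot a p Y Y) * Y l)
           (fun l => X l + - (gdot a p X Y / gdot a p Y Y) * Y l) =
  (gdot a p X X * gdot a p Y Y - gdot a p X Y ^ 2) / gdot a p Y Y.
Proof. intros HY; rewrite gdot_comb_self; field; lra. Qed.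

Lemma gdot_cauchy_schwarz (X Y : vec) : 0 < gdot a p Y Y ->
  gdot a p X Y ^ 2 <= gdot a p X X * gdot a p Y Y.
Proof.
  intros HY.
  pose proof (gdot_self_nonneg (fun l => X l + - (gdot a p X Y / gdot a p Y Y) * Y l)) as H.
  rewrite gdot_comb_self_residual in H by exact HY.
  apply Rmult_le_compat_r with (r := gdot a p Y Y) in H; [|lra].
  unfold Rdiv in H; rewrite Rmult_assoc, Rinv_l, Rmult_0_l in H; lra.
Qed.

Lemma gdot_cauchy_schwarz_eq_vertical (X Y : vec) : 0 < gdot a p Y Y ->
  gdot a p X X * gdot a p Y Y = gdot a p X Y ^ 2 ->
  X 2%nat = gdot a p X Y / gdot a p Y Y * Y 2%nat.
Proof.
  intros HY Heq.
  assert (H0 := gdot_self_0_vertical (fun l => X l + - (gdot a p X Y / gdot a p Y Y) * Y l)).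
  rewrite gdot_comb_self_residual, Heq in H0 by exact HY.
  simpl in H0; unfold Rminus in H0; rewrite Rplus_opp_r in H0.
  pose proof (H0 ltac:(unfold Rdiv; ring)); lra.
Qed.

End InnerProduct.

Definition det3 (m00 m01 m02 m10 m11 m12 m20 m21 m22 : R) : R :=
  m00 * (m11 * m22 - m12 * m21) - m01 * (m10 * m22 - m12 * m20)
  + m02 * (m10 * m21 - m11 * m20).

Definition det4 (m00 m01 m02 m03 m10 m11 m12 m13 m20 m21 m22 m23 m30 m31 m32 m33 : R) : R :=
  m00 * det3 m11 m12 m13 m21 m22 m23 m31 m32 m33
  - m01 * det3 m10 m12 m13 m20 m22 m23 m30 m32 m33
  + m02 * det3 m10 m11 m13 m20 m21 m23 m30 m31 m33
  - m03 * det3 m10 m11 m12 m20 m21 m22 m30 m31 m32.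

Definition wdot (w x0 x1 x2 y0 y1 y2 : R) : R := w * (x0 * y0 + x1 * y1) + x2 * y2.

Lemma det4_gram_3d (w a0 a1 a2 b0 b1 b2 c0 c1 c2 d0 d1 d2 : R) :
  det4 (wdot w a0 a1 a2 a0 a1 a2) (wdot w a0 a1 a2 b0 b1 b2)
       (wdot w a0 a1 a2 c0 c1 c2) (wdot w a0 a1 a2 d0 d1 d2)
       (wdot w b0 b1 b2 a0 a1 a2) (wdot w b0 b1 b2 b0 b1 b2)
       (wdot w b0 b1 b2 c0 c1 c2) (wdot w b0 b1 b2 d0 d1 d2)
       (wdot w c0 c1 c2 a0 a1 a2) (wdot w c0 c1 c2 b0 b1 b2)
       (wdot w c0 c1 c2 c0 c1 c2) (wdot w c0 c1 c2 d0 d1 d2)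
       (wdot w d0 d1 d2 a0 a1 a2) (wdot w d0 d1 d2 b0 b1 b2)
       (wdot w d0 d1 d2 c0 c1 c2) (wdot w d0 d1 d2 d0 d1 d2) = 0.
Proof. unfold det4, det3, wdot; ring. Qed.

(* The Gram matrix of A, C, B, D is block diagonal, and singular in dimension 3. *)
Lemma gdot_gram_orthogonal_pairs (a : R) (p A B C D : vec) :
  gdot a p A B = 0 -> gdot a p A D = 0 -> gdot a p C B = 0 -> gdot a p C D = 0 ->
  (gdot a p A A * gdot a p C C - gdot a p A C ^ 2) *
  (gdot a p B B * gdot a p D D - gdot a p B D ^ 2) = 0.
Proof.
  intros HAB HAD HCB HCD.
  assert (Hw : forall X Y, gdot a p X Y = wdot (/ conf a (p 0%nat) (p 1%nat) ^ 2)
                 (X 0%nat) (X 1%nat) (X 2%nat) (Y 0%nat) (Y 1%nat) (Y 2%nat)).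
  { intros X Y; rewrite gdot_hdot; unfold hdot, wdot, Rdiv; ring. }
  pose proof (det4_gram_3d (/ conf a (p 0%nat) (p 1%nat) ^ 2) (A 0%nat) (A 1%nat) (A 2%nat)
    (B 0%nat) (B 1%nat) (B 2%nat) (C 0%nat) (C 1%nat) (C 2%nat)
    (D 0%nat) (D 1%nat) (D 2%nat)) as E.
  rewrite <- !Hw in E.
  rewrite (gdot_sym a p B A), (gdot_sym a p D A), (gdot_sym a p B C), (gdot_sym a p D C),
    (gdot_sym a p C A), (gdot_sym a p D B), HAB, HAD, HCB, HCD in E.
  rewrite <- E; unfold det4, det3; ring.
Qed.

(** * Smooth functions on an open interval *)

Section OpenInterval.
Variables alpha beta : R.

Lemma locally_open_interval (t : R) : alpha < t < beta ->
  locally t (fun s => alpha < s < beta).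
Proof.
  intros Ht; apply (locally_interval _ t (Finite alpha) (Finite beta)); simpl; try lra.
  intros y H1 H2; lra.
Qed.

Lemma Derive_ext_on (f g : R -> R) (t : R) :
  (forall s, alpha < s < beta -> f s = g s) -> alpha < t < beta ->
  Derive f t = Derive g t.
Proof.
  intros Hfg Ht; apply Derive_ext_loc.
  generalize (locally_open_interval t Ht); apply filter_imp; exact Hfg.
Qed.

Lemma ex_derive_ext_on (f g : R -> R) (t : R) :
  (forall s, alpha < s < beta -> f s = g s) -> alpha < t < beta ->
  ex_derive f t -> ex_derive g t.
Proof.
  intros Hfg Ht; apply ex_derive_ext_loc.
  generalize (locally_open_interval t Ht); apply filter_imp; exact Hfg.
Qed.

Lemma is_derive_eq_on (f g : R -> R) (t l1 l2 : R) :
  (forall s, alpha < s < beta -> f s = g s) -> alpha < t < beta ->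
  is_derive f t l1 -> is_derive g t l2 -> l1 = l2.
Proof.
  intros Hfg Ht H1 H2.
  rewrite <- (is_derive_unique f t l1 H1), <- (is_derive_unique g t l2 H2).
  exact (Derive_ext_on f g t Hfg Ht).
Qed.

Lemma is_derive_const_on (f : R -> R) (c t l : R) :
  (forall s, alpha < s < beta -> f s = c) -> alpha < t < beta ->
  is_derive f t l -> l = 0.
Proof.
  intros Hf Ht Hd; apply (is_derive_eq_on f (fun _ => c) t l 0 Hf Ht Hd).
  auto_derive; auto.
Qed.

Lemma is_derive_scal_on (f g : R -> R) (k t l1 l2 : R) :
  (forall s, alpha < s < beta -> f s = k * g s) -> alpha < t < beta ->
  is_derive f t l1 -> is_derive g t l2 -> l1 = k * l2.
Proof.
  intros Hfg Ht H1 H2; apply (is_derive_eq_on f (fun s => k * g s) t l1 _ Hfg Ht H1).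
  now apply is_derive_scal.
Qed.

Lemma is_derive_0_const_on (f : R -> R) :
  (forall s, alpha < s < beta -> is_derive f s 0) ->
  forall s1 s2, alpha < s1 < beta -> alpha < s2 < beta -> f s1 = f s2.
Proof.
  intros Hd s1 s2 H1 H2.
  assert (alpha < Rmin s1 s2) by (apply Rmin_glb_lt; lra).
  assert (Rmax s1 s2 < beta) by (apply Rmax_lub_lt; lra).
  destruct (MVT_gen f s1 s2 (fun _ => 0)) as [c [_ Hc]].
  - intros x Hx; apply Hd; simpl in Hx; lra.
  - intros x Hx; simpl in Hx; apply derivable_continuous_pt.
    exists 0; apply is_derive_Reals, Hd; lra.
  - lra.
Qed.

Fixpoint Cn_on (n : nat) (f : R -> R) : Prop :=
  match n with
  | O => True
  | S m => (forall t, alpha < t < beta -> ex_derive f t) /\ Cn_on m (Derive f)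
  end.

Definition smooth_on (f : R -> R) : Prop := forall n, Cn_on n f.

Lemma Cn_on_ext (n : nat) (f g : R -> R) :
  (forall s, alpha < s < beta -> f s = g s) -> Cn_on n f -> Cn_on n g.
Proof.
  revert f g; induction n as [|n IH]; intros f g Hfg Hf; simpl in *; auto.
  destruct Hf as [Hd Hf]; split.
  - intros t Ht; exact (ex_derive_ext_on f g t Hfg Ht (Hd t Ht)).
  - apply (IH (Derive f)); auto.
    intros s Hs; exact (Derive_ext_on f g s Hfg Hs).
Qed.

Lemma Cn_on_pred (n : nat) (f : R -> R) : Cn_on (S n) f -> Cn_on n f.
Proof.
  revert f; induction n as [|n IH]; intros f Hf; simpl in *; auto.
  destruct Hf as [Hd Hf]; auto.
Qed.

Lemma Cn_on_const (n : nat) (c : R) : Cn_on n (fun _ => c).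
Proof.
  revert c; induction n as [|n IH]; intros c; simpl; auto; split.
  - intros; apply ex_derive_const.
  - apply (Cn_on_ext n (fun _ => 0)); auto.
    intros; now rewrite Derive_const.
Qed.

Lemma Cn_on_plus (n : nat) (f g : R -> R) :
  Cn_on n f -> Cn_on n g -> Cn_on n (fun t => f t + g t).
Proof.
  revert f g; induction n as [|n IH]; intros f g Hf Hg; simpl in *; auto.
  destruct Hf as [Hdf Hf], Hg as [Hdg Hg]; split.
  - intros t Ht; auto_derive; auto.
  - apply (Cn_on_ext n (fun t => Derive f t + Derive g t)); auto.
    intros s Hs; rewrite Derive_plus; auto.
Qed.

Lemma Cn_on_mult (n : nat) (f g : R -> R) :
  Cn_on n f -> Cn_on n g -> Cn_on n (fun t => f t * g t).
Proof.
  revert f g; induction n as [|n IH]; intros f g Hf Hg; simpl; auto.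
  pose proof (Cn_on_pred _ _ Hf) as Hf'; pose proof (Cn_on_pred _ _ Hg) as Hg'.
  destruct Hf as [Hdf Hf], Hg as [Hdg Hg]; split.
  - intros t Ht; auto_derive; auto.
  - apply (Cn_on_ext n (fun t => Derive f t * g t + f t * Derive g t)).
    + intros s Hs; rewrite Derive_mult; auto.
    + apply Cn_on_plus; apply IH; auto.
Qed.

Lemma Cn_on_inv (n : nat) (h : R -> R) :
  (forall t, alpha < t < beta -> h t <> 0) -> Cn_on n h -> Cn_on n (fun t => / h t).
Proof.
  revert h; induction n as [|n IH]; intros h Hnz Hh; simpl; auto.
  pose proof (Cn_on_pred _ _ Hh) as Hh'; destruct Hh as [Hdh Hh]; split.
  - intros t Ht; apply ex_derive_inv; auto.
  - apply (Cn_on_ext n (fun t => (-1 * Derive h t) * (/ h t * / h t))).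
    + intros s Hs; rewrite Derive_inv; auto; field; auto.
    + apply Cn_on_mult; [apply Cn_on_mult; auto; apply Cn_on_const|].
      apply Cn_on_mult; apply IH; auto.
Qed.

Lemma smooth_on_ext (f g : R -> R) :
  (forall s, alpha < s < beta -> f s = g s) -> smooth_on f -> smooth_on g.
Proof. intros Hfg Hf n; exact (Cn_on_ext n f g Hfg (Hf n)). Qed.

Lemma smooth_on_const (c : R) : smooth_on (fun _ => c).
Proof. intros n; apply Cn_on_const. Qed.

Lemma smooth_on_plus (f g : R -> R) :
  smooth_on f -> smooth_on g -> smooth_on (fun t => f t + g t).
Proof. intros Hf Hg n; apply Cn_on_plus; auto. Qed.

Lemma smooth_on_mult (f g : R -> R) :
  smooth_on f -> smooth_on g -> smooth_on (fun t => f t * g t).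
Proof. intros Hf Hg n; apply Cn_on_mult; auto. Qed.


Lemma smooth_on_inv (h : R -> R) :
  (forall t, alpha < t < beta -> h t <> 0) -> smooth_on h -> smooth_on (fun t => / h t).
Proof. intros Hnz Hh n; apply Cn_on_inv; auto. Qed.

Lemma smooth_on_Derive (f : R -> R) : smooth_on f -> smooth_on (Derive f).
Proof. intros Hf n; exact (proj2 (Hf (S n))). Qed.

Lemma smooth_on_ex_derive (f : R -> R) (t : R) :
  smooth_on f -> alpha < t < beta -> ex_derive f t.
Proof. intros Hf; exact (proj1 (Hf 1%nat) t). Qed.

Lemma smooth_on_ex_derive_n (f : R -> R) :
  (forall n t, alpha < t < beta -> ex_derive_n f n t) -> smooth_on f.
Proof.
  intros H n; revert f H; induction n as [|n IH]; intros f H; simpl; auto; split.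
  - intros t Ht; exact (H 1%nat t Ht).
  - apply IH; intros [|m] t Ht; simpl; auto.
    unfold ex_derive_n in H |- *.
    apply (ex_derive_ext (Derive_n f (S m))); [|exact (H (S (S m)) t Ht)].
    intros s; change (Derive f) with (Derive_n f 1).
    now rewrite Derive_n_comp, Nat.add_1_r.
Qed.

End OpenInterval.

Ltac solve_smooth_on :=
  repeat match goal with
  | |- smooth_on _ _ (fun _ => _ + _) => apply smooth_on_plus
  | |- smooth_on _ _ (fun _ => _ * _) => apply smooth_on_mult
  | |- smooth_on _ _ (fun _ => _ / _) => apply smooth_on_mult
  | |- smooth_on _ _ (fun _ => / _) => apply smooth_on_inv
  | |- smooth_on _ _ (fun _ => _ ^ 2) => simpl pow
  | |- smooth_on _ _ (fun _ => _) => apply smooth_on_const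
  | H : smooth_on ?x ?y ?f |- smooth_on ?x ?y ?f => exact H
  end.

Lemma is_derive_hdot_sum (a : R) (v0 v1 v2 w0 w1 w2 x y : R -> R) (t : R) :
  ex_derive v0 t -> ex_derive v1 t -> ex_derive v2 t ->
  ex_derive w0 t -> ex_derive w1 t -> ex_derive w2 t ->
  ex_derive x t -> ex_derive y t -> conf a (x t) (y t) <> 0 ->
  is_derive (fun s => (v0 s * w0 s + v1 s * w1 s) / conf a (x s) (y s) ^ 2 + v2 s * w2 s) t
    ((Derive v0 t * w0 t + v0 t * Derive w0 t + Derive v1 t * w1 t + v1 t * Derive w1 t)
       / conf a (x t) (y t) ^ 2
     - (v0 t * w0 t + v1 t * w1 t) * (4 * a * (x t * Derive x t + y t * Derive y t))
       / conf a (x t) (y t) ^ 3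
     + (Derive v2 t * w2 t + v2 t * Derive w2 t)).
Proof.
  unfold conf; intros; auto_derive.
  - repeat split; auto; simpl; rewrite Rmult_1_r; intros E; nra.
  - repeat match goal with
      |- context [Derive (fun s => ?f s)] => change (Derive (fun s => f s)) with (Derive f)
    end.
    field; auto.
Qed.

Section CurveInM.
Variables (a alpha beta : R) (gamma : R -> vec).
Hypothesis Hs : smooth_curve_in_M a alpha beta gamma.

Lemma conf_curve_pos (t : R) :
  alpha < t < beta -> 0 < conf a (gamma t 0%nat) (gamma t 1%nat).
Proof. intros Ht; exact (proj1 Hs t Ht). Qed.

Lemma smooth_on_component (k : nat) :
  (k < 3)%nat -> smooth_on alpha beta (fun s => gamma s k).
Proof.
  intros Hk; apply smooth_on_ex_derive_n; intros n t Ht; exact (proj2 Hs k n t Hk Ht).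
Qed.

Lemma smooth_on_Gamma (k i j : nat) : (k < 3)%nat -> (i < 3)%nat -> (j < 3)%nat ->
  smooth_on alpha beta (fun t => Gamma a k i j (gamma t)).
Proof.
  intros Hk Hi Hj.
  apply (smooth_on_ext _ _ (fun t => christoffel a k i j (gamma t 0%nat) (gamma t 1%nat))).
  { intros s Hs'; rewrite Gamma_christoffel; auto.
    pose proof (conf_curve_pos s Hs'); lra. }
  pose proof (smooth_on_component 0 ltac:(lia)).
  pose proof (smooth_on_component 1 ltac:(lia)).
  unfold christoffel, conf; solve_smooth_on.
  intros t Ht; pose proof (conf_curve_pos t Ht); unfold conf in *; lra.
Qed.

Lemma smooth_on_nablaT (n k : nat) : (k < 3)%nat ->
  smooth_on alpha beta (fun t => nablaT a gamma n t k).
Proof.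
  revert k; induction n as [|n IH]; intros k Hk.
  - apply smooth_on_Derive, smooth_on_component, Hk.
  - change (smooth_on alpha beta (fun t => covD a gamma (nablaT a gamma n) t k)).
    unfold covD, sum3, vel.
    pose proof (IH 0%nat ltac:(lia)); pose proof (IH 1%nat ltac:(lia)).
    pose proof (IH 2%nat ltac:(lia)); pose proof (smooth_on_Derive _ _ _ (IH k Hk)).
    pose proof (smooth_on_Derive _ _ _ (smooth_on_component 0 ltac:(lia))).
    pose proof (smooth_on_Derive _ _ _ (smooth_on_component 1 ltac:(lia))).
    pose proof (smooth_on_Derive _ _ _ (smooth_on_component 2 ltac:(lia))).
    repeat match goal with |- smooth_on _ _ (fun _ => _ + _) => apply smooth_on_plus end;
      auto; apply smooth_on_mult; auto; apply smooth_on_mult; auto;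
      apply smooth_on_Gamma; lia.
Qed.

Lemma covD_vertical (V : R -> vec) (t : R) : alpha < t < beta ->
  covD a gamma V t 2%nat = Derive (fun s => V s 2%nat) t.
Proof.
  intros Ht; pose proof (conf_curve_pos t Ht); unfold covD, sum3.
  rewrite !Gamma_christoffel by (auto; lra).
  unfold christoffel, chr_cx, chr_cy; unfold conf in *; field; lra.
Qed.

Lemma is_derive_gdot (V W : R -> vec) (t : R) : alpha < t < beta ->
  (forall k, (k < 3)%nat -> ex_derive (fun s => V s k) t) ->
  (forall k, (k < 3)%nat -> ex_derive (fun s => W s k) t) ->
  is_derive (fun s => gdot a (gamma s) (V s) (W s)) t
    (gdot a (gamma t) (covD a gamma V t) (W t) + gdot a (gamma t) (V t) (covD a gamma W t)).
Proof.
  intros Ht HV HW; pose proof (conf_curve_pos t Ht) as Hc.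
  assert (Hg : forall k, (k < 3)%nat -> ex_derive (fun s => gamma s k) t).
  { intros k Hk; apply (smooth_on_ex_derive alpha beta); auto; apply smooth_on_component, Hk. }
  pose proof (is_derive_hdot_sum a (fun s => V s 0%nat) (fun s => V s 1%nat)
    (fun s => V s 2%nat) (fun s => W s 0%nat) (fun s => W s 1%nat) (fun s => W s 2%nat)
    (fun s => gamma s 0%nat) (fun s => gamma s 1%nat) t) as Hd.
  match type of Hd with
  | _ -> _ -> _ -> _ -> _ -> _ -> _ -> _ -> _ -> is_derive _ _ ?l =>
      replace (gdot a (gamma t) (covD a gamma V t) (W t)
               + gdot a (gamma t) (V t) (covD a gamma W t)) with l
  end.
  - apply (is_derive_ext _ _ t _ (fun s => eq_sym (gdot_hdot a (gamma s) (V s) (W s)))).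
    apply Hd; auto; lra.
  - rewrite !gdot_hdot; unfold hdot, covD, sum3, vel.
    rewrite !Gamma_christoffel by (auto; lra).
    unfold christoffel, chr_cx, chr_cy; unfold conf in *; simpl; field; lra.
Qed.

End CurveInM.

(** * The covariant derivatives of T along the curve *)

Definition frame_dot (a : R) (gamma : R -> vec) (i j : nat) (t : R) : R :=
  gdot a (gamma t) (nablaT a gamma i t) (nablaT a gamma j t).

Definition vertical (a : R) (gamma : R -> vec) (n : nat) (t : R) : R :=
  nablaT a gamma n t 2%nat.

Lemma hdot_gdot (a : R) (p X Y : vec) : hdot a p X Y = gdot a p X Y - X 2%nat * Y 2%nat.
Proof. rewrite gdot_hdot; ring. Qed.

Section FrameAlongCurve.
Variables (a alpha beta : R) (gamma : R -> vec).
Hypothesis Hs : smooth_curve_in_M a alpha beta gamma.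

Local Notation G := (frame_dot a gamma).
Local Notation F := (vertical a gamma).

Lemma frame_dot_sym (i j : nat) (t : R) : G i j t = G j i t.
Proof. apply gdot_sym. Qed.

Lemma is_derive_frame_dot (i j : nat) (t : R) : alpha < t < beta ->
  is_derive (G i j) t (G (S i) j t + G i (S j) t).
Proof.
  intros Ht; apply (is_derive_gdot a alpha beta gamma Hs _ _ t Ht);
    intros k Hk; apply (smooth_on_ex_derive alpha beta); auto; now apply smooth_on_nablaT.
Qed.

Lemma frame_dot_const_derive (i j : nat) (c t : R) :
  (forall s, alpha < s < beta -> G i j s = c) -> alpha < t < beta ->
  G (S i) j t + G i (S j) t = 0.
Proof.
  intros Hc Ht; exact (is_derive_const_on alpha beta _ c t _ Hc Ht (is_derive_frame_dot i j t Ht)).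
Qed.

Lemma is_derive_vertical (n : nat) (t : R) : alpha < t < beta ->
  is_derive (F n) t (F (S n) t).
Proof.
  intros Ht; unfold vertical, nablaT at 2; simpl.
  rewrite (covD_vertical a alpha beta gamma Hs _ t Ht).
  apply Derive_correct, (smooth_on_ex_derive alpha beta); auto.
  apply smooth_on_nablaT; auto; lia.
Qed.

Lemma vertical_scal_derive (m n : nat) (k t : R) :
  (forall s, alpha < s < beta -> F m s = k * F n s) -> alpha < t < beta ->
  F (S m) t = k * F (S n) t.
Proof.
  intros Hk Ht.
  exact (is_derive_scal_on alpha beta _ _ k t _ _ Hk Ht
    (is_derive_vertical m t Ht) (is_derive_vertical n t Ht)).
Qed.

Lemma frame_dot_11_curvature (t c : R) : alpha < t < beta ->
  curvature a gamma t = c -> G 1 1 t = c * c.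
Proof.
  intros Ht Hc; rewrite <- Hc; unfold curvature; rewrite sqrt_sqrt; auto.
  apply gdot_self_nonneg, (conf_curve_pos a alpha beta gamma Hs t Ht).
Qed.

Lemma geodesic_of_frame_dot_11_0 :
  (forall t, alpha < t < beta -> G 1 1 t = 0) -> geodesic a alpha beta gamma.
Proof.
  intros H0 t Ht k Hk; destruct (Req_dec (nablaT a gamma 1 t k) 0) as [E | E]; auto.
  pose proof (gdot_self_pos a (gamma t) (conf_curve_pos a alpha beta gamma Hs t Ht) _ k Hk E).
  specialize (H0 t Ht); unfold frame_dot in H0; lra.
Qed.

Hypothesis Harc : arc_length a alpha beta gamma.
Hypothesis Htri : triharmonic a alpha beta gamma.
Variable k2 : R.
Hypothesis Hk2 : forall t, alpha < t < beta -> G 1 1 t = k2.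

Lemma frame_dot_00 (t : R) : alpha < t < beta -> G 0 0 t = 1.
Proof. exact (Harc t). Qed.

Lemma frame_dot_01 (t : R) : alpha < t < beta -> G 0 1 t = 0.
Proof.
  intros Ht; pose proof (frame_dot_const_derive 0 0 1 t frame_dot_00 Ht) as E.
  rewrite frame_dot_sym in E; lra.
Qed.

Lemma frame_dot_02 (t : R) : alpha < t < beta -> G 0 2 t = - k2.
Proof.
  intros Ht; pose proof (frame_dot_const_derive 0 1 0 t frame_dot_01 Ht) as E.
  rewrite Hk2 in E by exact Ht; lra.
Qed.

Lemma frame_dot_12 (t : R) : alpha < t < beta -> G 1 2 t = 0.
Proof.
  intros Ht; pose proof (frame_dot_const_derive 1 1 k2 t Hk2 Ht) as E.
  rewrite frame_dot_sym in E; lra.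
Qed.

Lemma frame_dot_03 (t : R) : alpha < t < beta -> G 0 3 t = 0.
Proof.
  intros Ht; pose proof (frame_dot_const_derive 0 2 (- k2) t frame_dot_02 Ht) as E.
  rewrite frame_dot_12 in E by exact Ht; lra.
Qed.

Lemma frame_dot_13 (t : R) : alpha < t < beta -> G 1 3 t = - G 2 2 t.
Proof.
  intros Ht; pose proof (frame_dot_const_derive 1 2 0 t frame_dot_12 Ht) as E.
  lra.
Qed.

Lemma frame_dot_04 (t : R) : alpha < t < beta -> G 0 4 t = G 2 2 t.
Proof.
  intros Ht; pose proof (frame_dot_const_derive 0 3 0 t frame_dot_03 Ht) as E.
  rewrite frame_dot_13 in E by exact Ht; lra.
Qed.

Lemma triharmonic_frame_dot (j : nat) (t : R) : alpha < t < beta ->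
  G 5 j t
  + gdot a (gamma t) (Riem a (gamma t) (nablaT a gamma 3 t) (vel gamma t) (vel gamma t))
      (nablaT a gamma j t)
  - gdot a (gamma t) (Riem a (gamma t) (nablaT a gamma 2 t) (nablaT a gamma 1 t) (vel gamma t))
      (nablaT a gamma j t) = 0.
Proof.
  intros Ht; unfold frame_dot; rewrite <- gdot_add_sub_l.
  apply gdot_0_l; intros l Hl; now apply Htri.
Qed.

(* Both curvature terms vanish, as <R(X, Y) T, T> = 0. *)
Lemma frame_dot_05 (t : R) : alpha < t < beta -> G 0 5 t = 0.
Proof.
  intros Ht; pose proof (triharmonic_frame_dot 0 t Ht) as E.
  rewrite !gdot_Riem in E by exact (conf_curve_pos a alpha beta gamma Hs t Ht).
  change (vel gamma t) with (nablaT a gamma 0 t) in E.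
  rewrite frame_dot_sym; lra.
Qed.

Lemma frame_dot_23 (t : R) : alpha < t < beta -> G 2 3 t = 0.
Proof.
  intros Ht.
  assert (E13 : G 2 3 t + G 1 4 t = -1 * (G 3 2 t + G 2 3 t)).
  { apply (is_derive_scal_on alpha beta (G 1 3) (G 2 2) (-1) t); auto.
    - intros s Hs'; rewrite frame_dot_13 by exact Hs'; ring.
    - now apply is_derive_frame_dot.
    - now apply is_derive_frame_dot. }
  assert (E04 : G 1 4 t + G 0 5 t = 1 * (G 3 2 t + G 2 3 t)).
  { apply (is_derive_scal_on alpha beta (G 0 4) (G 2 2) 1 t); auto.
    - intros s Hs'; rewrite frame_dot_04 by exact Hs'; ring.
    - now apply is_derive_frame_dot.
    - now apply is_derive_frame_dot. }
  rewrite frame_dot_05 in E04 by exact Ht.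
  rewrite (frame_dot_sym 3 2) in E13, E04; lra.
Qed.

Lemma frame_dot_22_const (s t : R) :
  alpha < s < beta -> alpha < t < beta -> G 2 2 s = G 2 2 t.
Proof.
  apply is_derive_0_const_on; intros u Hu.
  replace 0 with (G 3 2 u + G 2 3 u) by (rewrite frame_dot_sym, frame_dot_23; auto; ring).
  now apply is_derive_frame_dot.
Qed.

Lemma frame_dot_14 (t : R) : alpha < t < beta -> G 1 4 t = 0.
Proof.
  intros Ht; pose proof (frame_dot_const_derive 1 3 (- G 2 2 t) t) as E.
  rewrite frame_dot_23 in E by exact Ht.
  enough (0 + G 1 4 t = 0) by lra.
  apply E; auto; intros s Hs'; rewrite frame_dot_13, (frame_dot_22_const s t); auto.
Qed.

Lemma frame_dot_15 (t : R) : alpha < t < beta -> G 1 5 t = G 3 3 t.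
Proof.
  intros Ht.
  pose proof (frame_dot_const_derive 2 3 0 t frame_dot_23 Ht) as E23.
  pose proof (frame_dot_const_derive 1 4 0 t frame_dot_14 Ht) as E14.
  lra.
Qed.

Lemma sqr_k2_le_frame_dot_22 (t : R) : alpha < t < beta -> k2 * k2 <= G 2 2 t.
Proof.
  intros Ht; pose proof (conf_curve_pos a alpha beta gamma Hs t Ht) as Hc.
  assert (H00 : 0 < G 0 0 t) by (rewrite frame_dot_00 by exact Ht; lra).
  pose proof (gdot_cauchy_schwarz a (gamma t) Hc (nablaT a gamma 2 t) _ H00) as H.
  change (G 2 0 t ^ 2 <= G 2 2 t * G 0 0 t) in H.
  rewrite (frame_dot_sym 2 0), frame_dot_02, frame_dot_00 in H by exact Ht; lra.
Qed.

Hypothesis Hk2_pos : 0 < k2.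

Section ConstantFrameDot22.
Variable P0 : R.
Hypothesis HP0 : forall t, alpha < t < beta -> G 2 2 t = P0.

Lemma vertical_3_of_cs_equality (t : R) : P0 = k2 * k2 -> alpha < t < beta ->
  F 3 t = - k2 * F 1 t.
Proof.
  intros HPk Ht; apply (vertical_scal_derive 2 0); auto; intros s Hs'.
  pose proof (conf_curve_pos a alpha beta gamma Hs s Hs') as Hc.
  assert (H00 : 0 < G 0 0 s) by (rewrite frame_dot_00 by exact Hs'; lra).
  assert (Heq : G 2 2 s * G 0 0 s = G 2 0 s ^ 2).
  { rewrite HP0, frame_dot_00, frame_dot_sym, frame_dot_02 by exact Hs'; rewrite HPk; ring. }
  pose proof (gdot_cauchy_schwarz_eq_vertical a (gamma s) Hc _ _ H00 Heq) as E.
  change (F 2 s = G 2 0 s / G 0 0 s * F 0 s) in E.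
  rewrite frame_dot_sym, frame_dot_02, frame_dot_00 in E by exact Hs'; rewrite E; field.
Qed.

Lemma frame_dot_33_of_cs_strict (t : R) : P0 <> k2 * k2 -> alpha < t < beta ->
  k2 * G 3 3 t = P0 ^ 2.
Proof.
  intros HPk Ht.
  assert (H21 : G 2 1 t = 0) by (rewrite frame_dot_sym; now apply frame_dot_12).
  pose proof (gdot_gram_orthogonal_pairs a (gamma t) _ _ _ _
    (frame_dot_01 t Ht) (frame_dot_03 t Ht) H21 (frame_dot_23 t Ht)) as E.
  change ((G 0 0 t * G 2 2 t - G 0 2 t ^ 2) * (G 1 1 t * G 3 3 t - G 1 3 t ^ 2) = 0) in E.
  rewrite frame_dot_00, frame_dot_02, Hk2, frame_dot_13, HP0 in E by exact Ht.
  apply Rmult_integral in E as [E | E]; [exfalso; apply HPk|]; lra.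
Qed.

Lemma vertical_3_of_cs_strict (t : R) : P0 <> k2 * k2 -> alpha < t < beta ->
  F 3 t = - (P0 / k2) * F 1 t.
Proof.
  intros HPk Ht; pose proof (conf_curve_pos a alpha beta gamma Hs t Ht) as Hc.
  assert (H11 : 0 < G 1 1 t) by (rewrite Hk2 by exact Ht; lra).
  assert (Heq : G 3 3 t * G 1 1 t = G 3 1 t ^ 2).
  { rewrite (frame_dot_sym 3 1), frame_dot_13, HP0, Hk2 by exact Ht.
    pose proof (frame_dot_33_of_cs_strict t HPk Ht); nra. }
  pose proof (gdot_cauchy_schwarz_eq_vertical a (gamma t) Hc _ _ H11 Heq) as E.
  change (F 3 t = G 3 1 t / G 1 1 t * F 1 t) in E.
  rewrite (frame_dot_sym 3 1), frame_dot_13, HP0, Hk2 in E by exact Ht.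
  rewrite E; field; lra.
Qed.

Lemma vertical_3_proportional (t0 : R) : alpha < t0 < beta ->
  exists A, 0 < A /\ forall t, alpha < t < beta -> F 3 t = - A * F 1 t.
Proof.
  intros Ht0; destruct (Req_dec P0 (k2 * k2)) as [HPk | HPk].
  - exists k2; split; auto; intros t Ht; now apply vertical_3_of_cs_equality.
  - exists (P0 / k2); split; [|intros t Ht; now apply vertical_3_of_cs_strict].
    pose proof (sqr_k2_le_frame_dot_22 t0 Ht0); rewrite HP0 in * by exact Ht0.
    apply Rdiv_lt_0_compat; nra.
Qed.

End ConstantFrameDot22.

Lemma vertical_5 (t : R) : alpha < t < beta -> F 5 t = 0.
Proof.
  intros Ht; pose proof (Htri t Ht 2%nat ltac:(lia)) as E.
  pose proof (conf_curve_pos a alpha beta gamma Hs t Ht) as Hc.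
  rewrite !Riem_hdot in E by (auto; lia); cbv [Nat.ltb Nat.leb] in E.
  unfold vertical; lra.
Qed.

Lemma vertical_1_2_3_0 (A t : R) : 0 < A ->
  (forall s, alpha < s < beta -> F 3 s = - A * F 1 s) -> alpha < t < beta ->
  F 1 t = 0 /\ F 2 t = 0 /\ F 3 t = 0.
Proof.
  intros HA H31 Ht.
  assert (H1 : forall s, alpha < s < beta -> F 1 s = 0).
  { intros s Hs'.
    assert (H42 : forall u, alpha < u < beta -> F 4 u = - A * F 2 u)
      by (intros u Hu; now apply vertical_scal_derive).
    pose proof (vertical_scal_derive 4 2 (- A) s H42 Hs') as H53.
    rewrite vertical_5, H31 in H53 by exact Hs'.
    assert (E : (A * A) * F 1 s = 0) by lra.
    apply Rmult_integral in E as [E | E]; [nra | exact E]. }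
  split; [|split].
  - now apply H1.
  - exact (is_derive_const_on alpha beta (F 1) 0 t _ H1 Ht (is_derive_vertical 1 t Ht)).
  - rewrite H31, H1 by exact Ht; ring.
Qed.

(* Pairing with T_1 leaves |T_3|^2 - 4a |T^h|^2 |T_2|^2 - 4a k2^2 = 0. *)
Lemma triharmonic_vertical_0_absurd (t : R) : a < 0 -> alpha < t < beta ->
  F 1 t = 0 -> F 2 t = 0 -> F 3 t = 0 -> False.
Proof.
  intros Ha Ht H1 H2 H3; pose proof (conf_curve_pos a alpha beta gamma Hs t Ht) as Hc.
  pose proof (hdot_self_nonneg a (gamma t) Hc (nablaT a gamma 0 t)) as N0.
  pose proof (gdot_self_nonneg a (gamma t) Hc (nablaT a gamma 3 t)) as N3.
  pose proof (sqr_k2_le_frame_dot_22 t Ht) as N2.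
  pose proof (triharmonic_frame_dot 1 t Ht) as E.
  rewrite !gdot_Riem in E by exact Hc.
  change (vel gamma t) with (nablaT a gamma 0 t) in E.
  rewrite !hdot_gdot in E; rewrite hdot_gdot in N0.
  change (G 5 1 t + 4 * a * ((G 0 0 t - F 0 t * F 0 t) * (G 3 1 t - F 3 t * F 1 t)
            - (G 3 0 t - F 3 t * F 0 t) * (G 0 1 t - F 0 t * F 1 t))
          - 4 * a * ((G 1 0 t - F 1 t * F 0 t) * (G 2 1 t - F 2 t * F 1 t)
            - (G 2 0 t - F 2 t * F 0 t) * (G 1 1 t - F 1 t * F 1 t)) = 0) in E.
  change (0 <= G 0 0 t - F 0 t * F 0 t) in N0; change (0 <= G 3 3 t) in N3.
  rewrite (frame_dot_sym 5 1), (frame_dot_sym 3 1), (frame_dot_sym 3 0), (frame_dot_sym 1 0),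
    (frame_dot_sym 2 1), (frame_dot_sym 2 0) in E.
  rewrite frame_dot_15, frame_dot_13, frame_dot_03, frame_dot_01, frame_dot_12, frame_dot_02,
    Hk2, H1, H2, H3 in E by exact Ht.
  assert (0 <= - a * (G 0 0 t - F 0 t * F 0 t) * G 2 2 t)
    by (apply Rmult_le_pos; [apply Rmult_le_pos|]; nra).
  assert (0 < - a * (k2 * k2)) by (apply Rmult_lt_0_compat; nra).
  nra.
Qed.

Lemma triharmonic_constant_curvature_absurd (t0 : R) :
  a < 0 -> alpha < t0 < beta -> False.
Proof.
  intros Ha Ht0.
  destruct (vertical_3_proportional (G 2 2 t0) (fun t Ht => frame_dot_22_const t t0 Ht Ht0)
    t0 Ht0) as [A [HA H31]].
  destruct (vertical_1_2_3_0 A t0 HA H31 Ht0) as [H1 [H2 H3]].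
  exact (triharmonic_vertical_0_absurd t0 Ha Ht0 H1 H2 H3).
Qed.

End FrameAlongCurve.

Theorem corollary4p10 :
  forall (a alpha beta : R) (gamma : R -> vec),
    a < 0 -> alpha < beta ->
    smooth_curve_in_M a alpha beta gamma ->
    arc_length a alpha beta gamma ->
    triharmonic a alpha beta gamma ->
    constant_curvature a alpha beta gamma ->
    ~ geodesic a alpha beta gamma ->
    False.
Proof.
  intros a alpha beta gamma Ha Hab Hs Harc Htri [c Hc] Hng.
  set (t0 := (alpha + beta) / 2); assert (Ht0 : alpha < t0 < beta) by (unfold t0; lra).
  assert (Hk2 : forall t, alpha < t < beta -> frame_dot a gamma 1 1 t = c * c)
    by (intros t Ht; apply (frame_dot_11_curvature a alpha beta gamma Hs); auto).
  assert (Hk2_pos : 0 < c * c).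
  { destruct (Rle_lt_or_eq_dec 0 (c * c) (Rle_0_sqr c)) as [H | H]; auto.
    exfalso; apply Hng, (geodesic_of_frame_dot_11_0 a alpha beta gamma Hs).
    intros t Ht; rewrite Hk2; auto. }
  exact (triharmonic_constant_curvature_absurd a alpha beta gamma Hs Harc Htri (c * c) Hk2
    Hk2_pos t0 Ha Ht0).
Qed.
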